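(* Encode a configuration of the Tower of Hanoi with $n$ disks $1,\dots,n$ (disk $j$ smaller than disk $j+1$) on pegs $0,1,2$ by the word $x_1\dots x_n\in\{0,1,2\}^n$ where disk $j$ lies on peg $x_j$. Let $\Gamma_n$ be the graph with vertex set $\{0,1,2\}^n$ in which $u$ and $v$ are adjacent iff $v=a_{xy}(u)\ne u$ for some $0\le x<y\le2$, where $a_{xy}$ changes the first occurrence in $u$ of either $x$ or $y$ into the other symbol. For distinct $x,y\in\{0,1,2\}$ there is a unique shortest path in $\Gamma_n$ from $x^n$ to $y^n$ (of length $2^n-1$); for $0\le i\le 2^n-1$ let $C^{xy}_i(n)$ be the configuration at distance $i$ from $x^n$ along it. For each ordered pair $(x,y)$ of distinct elements of $\{0,1,2\}$, with $z$ the third element, define maps $q_{xy}$ from binary words to ternary words by $q_{xy}(\emptyset)=\emptyset$, $q_{xy}(0w)=x\,q_{xz}(w)$, $q_{xy}(1w)=y\,q_{zy}(w)$. For $0\le i\le2^n-1$ let $[i]_2$ be the length-$n$ binary representation of $i$, least significant digit first (padded with zeros). Then for all $n\ge1$, all distinct $x,y$, and all $0\le i\le 2^n-1$, \[q_{xy}\big([i]_2^R\big)=\big(C^{xy}_i(n)\big)^R,\] where $R$ denotes word reversal. *)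

(* Pegs are 'I_3; configurations are words in seq 'I_3,
   position j-1 of the word = peg of disk j (smallest disk first). *)
From mathcomp Require Import all_boot.
Set Implicit Arguments. Unset Strict Implicit. Unset Printing Implicit Defensive.

Fixpoint amove (x y : 'I_3) (u : seq 'I_3) : seq 'I_3 :=
  match u with
  | [::] => [::]
  | c :: u' => if c == x then y :: u' else if c == y then x :: u' else c :: amove x y u'
  end.

Definition hadj (u v : seq 'I_3) : bool :=
  [exists x : 'I_3, exists y : 'I_3, [&& x < y, v == amove x y u & v != u]].

Definition hwalk (n : nat) (x y : 'I_3) (p : seq (seq 'I_3)) : Prop :=
  match p with
  | [::] => False
  | s :: rest => [/\ s = nseq n x, path hadj s rest & last s rest = nseq n y]
  end.

Definition hshortest (n : nat) (x y : 'I_3) (p : seq (seq 'I_3)) : Prop :=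
  hwalk n x y p /\ forall p', hwalk n x y p' -> size p <= size p'.

Definition third (x y : 'I_3) : 'I_3 := inord (3 - x - y).

(* q_xy on binary words (false = 0, true = 1) *)
Fixpoint qmap (x y : 'I_3) (w : seq bool) : seq 'I_3 :=
  match w with
  | [::] => [::]
  | false :: w' => x :: qmap x (third x y) w'
  | true :: w' => y :: qmap (third x y) y w'
  end.

Definition bin (n i : nat) : seq bool := mkseq (fun k => odd (i %/ 2 ^ k)) n.

From mathcomp Require Import all_boot zify.

Set Implicit Arguments.
Unset Strict Implicit.
Unset Printing Implicit Defensive.

(* The recursive solution [hanoi] moves n disks from x to the third peg z,
   moves the largest disk from x to y, and moves the n disks from z to y.
   Conversely, the largest disk must move at some point of any walk from x^(n+1)
   to y^(n+1); at its first move both other pegs are free of smaller disks, so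
   the walk starts with a walk of the smaller disks from x^n to some z^n, and
   symmetrically it ends with a walk from some z'^n to y^n.  The two segments
   are disjoint, so by induction the walk has at least 2^(n+1) vertices, with
   equality only for [hanoi].  Reading i most significant digit first, each
   digit says in which half of the recursion the configuration lies, i.e. where
   the current largest disk sits, which is exactly the recursion of q_xy. *)

Lemma nseqSr (T : Type) n (x : T) : nseq n.+1 x = rcons (nseq n x) x.
Proof. by elim: n => //= n <-. Qed.

Lemma size_disjoint_prefix_suffix (T : Type) (a b : pred T) (l r s t : seq T) :
  all a l -> all b r -> (forall u, a u -> ~~ b u) -> l ++ s = t ++ r ->
  size l + size r <= size (l ++ s).
Proof.
move=> al br ab E.
have -> : size l + size r = count a l + count b r.
  by move: al br; rewrite !all_count => /eqP-> /eqP->.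
apply: (@leq_trans (count a (l ++ s) + count b (l ++ s))).
  by apply: leq_add; [rewrite count_cat leq_addr | rewrite E count_cat leq_addl].
rewrite -count_predUI (@eq_count _ (predI a b) pred0) ?count_pred0 ?addn0 ?count_size //.
by move=> u /=; case: (boolP (a u)) => [au|] //; rewrite (negbTE (ab u au)).
Qed.

Lemma third_val (x y : 'I_3) : x != y -> nat_of_ord (third x y) = 3 - x - y.
Proof. by move=> xy; rewrite /third inordK //; move: xy; rewrite -val_eqE /=; lia. Qed.

Lemma third_neq (x y : 'I_3) : x != y -> (third x y != x) && (third x y != y).
Proof.
move=> xy; rewrite -!val_eqE /= third_val //.
by move: xy (ltn_ord x) (ltn_ord y); rewrite -val_eqE /=; lia.
Qed.

Lemma third_neql (x y : 'I_3) : x != y -> third x y != x.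
Proof. by case/third_neq/andP. Qed.

Lemma third_neqr (x y : 'I_3) : x != y -> third x y != y.
Proof. by case/third_neq/andP. Qed.

Lemma third_unique (x y c : 'I_3) : x != y -> c != x -> c != y -> c = third x y.
Proof.
move=> xy cx cy; apply/val_inj; rewrite /= third_val //.
by move: xy cx cy (ltn_ord x) (ltn_ord y) (ltn_ord c); rewrite -!val_eqE /=; lia.
Qed.

Definition swap_peg (p q c : 'I_3) : 'I_3 :=
  if c == p then q else if c == q then p else c.

(* The last letter is the largest disk: [rcons u c] puts on peg [c] a disk
   larger than all those of [u]. *)
Lemma amove_rcons p q u c : amove p q (rcons u c) =
  if has (fun d => (d == p) || (d == q)) u then rcons (amove p q u) c
  else rcons u (swap_peg p q c).
Proof.
elim: u => [|d u IH] /=; first by rewrite /swap_peg; case: (c == p); case: (c == q).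
by case: ifP => //= _; case: ifP => //= _; rewrite IH; case: ifP.
Qed.

Lemma amove_id p q u : ~~ has (fun d => (d == p) || (d == q)) u -> amove p q u = u.
Proof.
elim: u => [|d u IH] //=.
by rewrite !negb_or => /andP[/andP[/negbTE-> /negbTE->] /IH ->].
Qed.

Lemma size_amove p q u : size (amove p q u) = size u.
Proof.
by elim: u => [|d u IH] //=; case: (d == p); case: (d == q) => //=; rewrite IH.
Qed.

Lemma amoveK p q : p != q -> involutive (amove p q).
Proof.
move=> pq; elim=> [|d u IH] //=.
case: (eqVneq d p) => [->|dp] /=; first by rewrite eqxx /= eq_sym (negbTE pq).
case: (eqVneq d q) => [->|dq] /=; first by rewrite eqxx.
by rewrite (negbTE dp) (negbTE dq) IH.
Qed.

Lemma amoveC p q : p != q -> amove p q =1 amove q p.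
Proof.
move=> pq; elim=> [|d u IH] //=.
by case: (eqVneq d p) => [->|dp]; [rewrite (negbTE pq) | rewrite IH].
Qed.

Lemma hadjP u v :
  reflect (exists p q, [/\ p != q, v = amove p q u & v != u]) (hadj u v).
Proof.
apply: (iffP existsP) => [[p /existsP[q /and3P[pq /eqP-> vu]]]|[p [q [pq Ev vu]]]].
  by exists p, q; rewrite neq_ltn pq.
case: (ltngtP p q) => [lt|gt|/val_inj eq]; last by rewrite eq eqxx in pq.
  by exists p; apply/existsP; exists q; rewrite lt vu Ev eqxx.
by exists q; apply/existsP; exists p; rewrite gt vu Ev amoveC // eqxx.
Qed.

Lemma hadj_sym : symmetric hadj.
Proof.
have hadjC u v : hadj u v -> hadj v u.
  case/hadjP=> p [q [pq Ev vu]]; apply/hadjP; exists p, q.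
  by split=> //; [rewrite Ev amoveK | rewrite eq_sym].
by move=> u v; apply/idP/idP; apply: hadjC.
Qed.

Lemma size_hadj u v : hadj u v -> size v = size u.
Proof. by case/hadjP=> p [q [_ -> _]]; rewrite size_amove. Qed.

Lemma size_path_last u s : path hadj u s -> size (last u s) = size u.
Proof. by elim: s u => [|v s IH] u //= /andP[/size_hadj <- /IH]. Qed.

Lemma hadj_rcons u v c : hadj u v -> hadj (rcons u c) (rcons v c).
Proof.
case/hadjP=> p [q [pq Ev vu]]; apply/hadjP; exists p, q; split => //.
  rewrite amove_rcons; case: ifP => [_|/negbT untouched]; first by rewrite Ev.
  by move: vu; rewrite Ev amove_id ?eqxx.
by apply: contra vu => /eqP/rcons_inj[->].
Qed.

Lemma path_hadj_rcons u s c :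
  path hadj u s -> path hadj (rcons u c) (map (rcons^~ c) s).
Proof. by elim: s u => [|v s IH] u //= /andP[/hadj_rcons-> /IH]. Qed.

Lemma hadj_rcons_inv u c v : hadj (rcons u c) v ->
  exists w d, v = rcons w d /\
    if d == c then is_true (hadj u w) else w = u /\ all (fun e => (e != c) && (e != d)) u.
Proof.
case/hadjP=> p [q [pq Ev vu]]; rewrite amove_rcons in Ev.
case: ifP => [touched|/negbT untouched] in Ev.
  exists (amove p q u), c; split => //; rewrite eqxx; apply/hadjP; exists p, q.
  by split => //; apply: contra vu => /eqP E; rewrite Ev E.
have moved : swap_peg p q c != c by apply: contra vu => /eqP E; rewrite Ev E.
exists u, (swap_peg p q c); split => //; rewrite (negbTE moved); split => //.
apply/allP => e eu; have : ~~ ((e == p) || (e == q)).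
  by apply: contra untouched => epq; apply/hasP; exists e.
move: moved; rewrite /swap_peg negb_or.
case: (eqVneq c p) => [->|cp]; first by rewrite andbC.
by case: (eqVneq c q) => [->|cq]; rewrite ?eqxx // andbC.
Qed.

Lemma path_hadj_rcons_split u c s : path hadj (rcons u c) s ->
  has (fun v => last c v != c) s ->
  exists ps u' d s', [/\ rcons u c :: s = map (rcons^~ c) (u :: ps) ++ rcons u' d :: s',
    path hadj u ps, last u ps = u', d != c & all (fun e => (e != c) && (e != d)) u'].
Proof.
elim: s u => [|v s IH] u //= /andP[/hadj_rcons_inv[w [d [-> step]]] sP].
case: (eqVneq d c) => [->|dc] in step sP *.
  rewrite last_rcons eqxx /= => moves.
  have [ps [u' [d' [s' [Es P L Nd A]]]]] := IH w sP moves.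
  by exists (w :: ps), u', d', s'; rewrite /= step P Es.
by case: step => -> A _; exists [::], u, d, s.
Qed.

Lemma hwalk_rev n x y p : hwalk n x y p -> hwalk n y x (rev p).
Proof.
case: p => [|s rest] //= [Es P L].
have E : last s rest :: rev (belast s rest) = rev (s :: rest).
  by rewrite [s :: rest]lastI rev_rcons.
rewrite -E /=; split => //.
  by rewrite rev_path; apply: sub_path P => u v; rewrite hadj_sym.
by rewrite -(last_cons s) E rev_cons last_rcons.
Qed.

Lemma hwalk_first_move n x y p : x != y -> hwalk n.+1 x y p ->
  exists ps w s, [/\ w != x, hwalk n x (third x w) ps &
    p = map (rcons^~ x) ps ++ rcons (nseq n (third x w)) w :: s].
Proof.
case: p => [|s0 rest] // xy [-> P L]; rewrite nseqSr in P.
have moves : has (fun v => last x v != x) rest.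
  case: rest => [|v r] in P L *; first by move: L => /= [] /eqP; rewrite (negbTE xy).
  have Lr : last v r = nseq n.+1 y := L.
  apply/hasP; exists (last v r); first exact: mem_last.
  by rewrite Lr nseqSr last_rcons eq_sym.
have [ps [u' [w [s [Ep P' L' wx A]]]]] := path_hadj_rcons_split P moves.
have xw : x != w by rewrite eq_sym.
have Eu' : u' = nseq n (third x w).
  have <- : size u' = n by rewrite -L' size_path_last // size_nseq.
  apply/all_pred1P/allP => e /(allP A) /andP[ex ew].
  by rewrite /= (third_unique xw ex ew).
exists (nseq n x :: ps), w, s; split => //; last by rewrite nseqSr Ep Eu'.
by split => //; rewrite L'.
Qed.

Lemma hwalk_last_move n x y p : x != y -> hwalk n.+1 x y p ->
  exists z l qs, [/\ z != y, hwalk n z y qs & p = l ++ map (rcons^~ y) qs].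
Proof.
move=> xy /hwalk_rev; rewrite eq_sym in xy.
case/(hwalk_first_move xy) => ps [w [s [wy W Ep]]].
exists (third y w), (rev (rcons (nseq n (third y w)) w :: s)), (rev ps); split.
- by apply: third_neql; rewrite eq_sym.
- exact: hwalk_rev.
- by rewrite -(revK p) Ep rev_cat map_rev.
Qed.

Fixpoint hanoi n (x y : 'I_3) : seq (seq 'I_3) :=
  if n is n'.+1 then
    map (rcons^~ x) (hanoi n' x (third x y)) ++ map (rcons^~ y) (hanoi n' (third x y) y)
  else [:: [::]].

Lemma size_hanoi n x y : size (hanoi n x y) = 2 ^ n.
Proof.
by elim: n x y => [|n IH] x y //=; rewrite size_cat !size_map !IH expnS mul2n addnn.
Qed.

Lemma hwalk_hanoi n x y : x != y -> hwalk n x y (hanoi n x y).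
Proof.
elim: n x y => [|n IH] x y xy //=.
have zy := third_neqr xy; have xz : x != third x y by rewrite eq_sym third_neql.
move: (IH x _ xz) (IH _ y zy) => /=.
case: (hanoi n x _) => [|s1 r1] // [-> P1 L1].
case: (hanoi n _ y) => [|s2 r2] // [-> P2 L2].
rewrite map_cons cat_cons; split; first by rewrite nseqSr.
  rewrite cat_path path_hadj_rcons //= (last_map (rcons^~ x)) L1 path_hadj_rcons // andbT.
  apply/hadjP; exists x, y; split => //.
    rewrite amove_rcons has_nseq /= eq_sym (negbTE xz) (negbTE zy) andbF.
    by rewrite /swap_peg eqxx.
  by apply/eqP => /rcons_inj[] yx; rewrite yx eqxx in xy.
by rewrite last_cat map_cons last_cons (last_map (rcons^~ y)) L2 -nseqSr.
Qed.

Lemma hwalk_hanoi_min n x y p : x != y -> hwalk n x y p ->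
  2 ^ n <= size p /\ (size p = 2 ^ n -> p = hanoi n x y).
Proof.
elim: n x y p => [|n IH] x y p xy W.
  by case: p W => [|s [|? ?]] // [-> _ _].
have [ps [w [s [wx Wps Ep]]]] := hwalk_first_move xy W.
have [z [l [qs [zy Wqs Ep']]]] := hwalk_last_move xy W.
have xz : x != third x w by rewrite eq_sym third_neql // eq_sym.
have [ge_ps eq_ps] := IH _ _ _ xz Wps.
have [ge_qs eq_qs] := IH _ _ _ zy Wqs.
have Epp : map (rcons^~ x) ps ++ rcons (nseq n (third x w)) w :: s =
           l ++ map (rcons^~ y) qs.
  by rewrite -Ep.
have disj : size ps + size qs <= size p.
  rewrite Ep -(size_map (rcons^~ x)) -(size_map (rcons^~ y) qs).
  apply: (size_disjoint_prefix_suffix (a := fun v => last x v == x)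
                                      (b := fun v => last x v == y) _ _ _ Epp).
  - by rewrite all_map; apply/allP => v _ /=; rewrite last_rcons.
  - by rewrite all_map; apply/allP => v _ /=; rewrite last_rcons.
  - by move=> v /eqP ->.
split; first by rewrite expnS mul2n -addnn; apply: leq_trans disj; apply: leq_add.
move=> size_p; rewrite expnS mul2n -addnn in size_p.
have [size_ps size_qs] : size ps = 2 ^ n /\ size qs = 2 ^ n by lia.
(* With equality the two segments cover p, so the largest disk moves once. *)
have Etail : rcons (nseq n (third x w)) w :: s = map (rcons^~ y) qs.
  move/eqP: Epp; rewrite eqseq_cat => [/andP[_ /eqP //]|].
  by move/(congr1 size): Ep'; rewrite size_cat !size_map size_p size_ps size_qs => /addIn.
case: qs Wqs Etail size_qs {eq_qs ge_qs Ep' Epp disj} => [|h qs] // [_ P L].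
case=> /rcons_inj[Eh Ew] Es size_hqs; subst w h.
have W' : hwalk n (third x y) y (nseq n (third x y) :: qs) by split.
have [_ eq_hqs] := IH _ _ _ (third_neqr xy) W'.
by rewrite Ep eq_ps // Es -(map_cons (rcons^~ y)) eq_hqs.
Qed.

Lemma rev_binS n i : rev (bin n.+1 i) = odd (i %/ 2 ^ n) :: rev (bin n i).
Proof. by rewrite /bin mkseqS rev_rcons. Qed.

Lemma bin_mod n i : bin n (i %% 2 ^ n) = bin n i.
Proof.
apply/eq_in_map => k; rewrite mem_iota add0n => /= lt_kn.
have E2n : 2 ^ n = 2 ^ (n - k) * 2 ^ k by rewrite -expnD subnK // ltnW.
rewrite {2}(divn_eq i (2 ^ n)) {3}E2n mulnA divnMDl ?expn_gt0 // oddD oddM oddX.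
by rewrite subn_eq0 leqNgt lt_kn andbF.
Qed.

Lemma qmap_bin_hanoi n x y i :
  i < 2 ^ n -> qmap x y (rev (bin n i)) = rev (nth [::] (hanoi n x y) i).
Proof.
elim: n x y i => [|n IH] x y i; first by rewrite expn0 ltnS leqn0 => /eqP ->.
rewrite rev_binS /= nth_cat size_map size_hanoi expnS mul2n -addnn => lt_i.
have [lo|hi] := ltnP i (2 ^ n).
  by rewrite divn_small //= IH // (nth_map [::]) ?size_hanoi // rev_rcons.
have {hi lt_i} [j lt_j ->] : exists2 j, j < 2 ^ n & i = 2 ^ n + j.
  by exists (i - 2 ^ n); [rewrite ltn_subLR | rewrite subnKC].
rewrite addKn divnDl // divnn expn_gt0 divn_small //=.
by rewrite -bin_mod modnDl bin_mod IH // (nth_map [::]) ?size_hanoi // rev_rcons.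
Qed.

Lemma hshortest_hanoi n x y p : x != y -> hshortest n x y p <-> p = hanoi n x y.
Proof.
move=> xy; split=> [[W shortest] | ->].
  have [ge_p eq_p] := hwalk_hanoi_min xy W; apply: eq_p; apply/eqP.
  by rewrite eqn_leq ge_p -(size_hanoi n x y) (shortest _ (hwalk_hanoi n xy)).
split=> [|p' W']; first exact: hwalk_hanoi.
by rewrite size_hanoi; case: (hwalk_hanoi_min xy W').
Qed.

Theorem mainTheorem13 (n : nat) (x y : 'I_3) :
  0 < n -> x != y ->
  (exists p, hshortest n x y p) /\
  (forall p, hshortest n x y p ->
     forall i, i <= 2 ^ n - 1 ->
       qmap x y (rev (bin n i)) = rev (nth [::] p i)).
Proof.
move=> _ xy; split=> [|p /(hshortest_hanoi _ _ xy) -> i le_i].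
  by exists (hanoi n x y); apply/hshortest_hanoi.
by apply: qmap_bin_hanoi; move: le_i (expn_gt0 2 n); lia.
Qed.
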